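(* Let $V$ be a nonempty finite subset of $\mathbb{R}^n$ and $W$ a nonempty finite subset of $\mathbb{R}^n\setminus\{0\}$. Let $L=\operatorname{conv}(V)+\operatorname{cone}(W)$ and $f\in\operatorname{int}(L)$. For $t\in\mathbb{N}$ let $L_t=\operatorname{conv}(V\cup(f+tW))$. Then $f\in\operatorname{int}(L_t)$ for every $t\in\mathbb{N}$, the sequence $(L_t)_{t=1}^\infty$ is increasing with respect to inclusion, and $d_f(L_t,L)\to0$ as $t\to\infty$.
   Context: For $X\subseteq\mathbb{R}^n$, the polar is $X^\circ=\{r\in\mathbb{R}^n:r\cdot x\le1\ \forall x\in X\}$. For closed convex sets $B_1,B_2\subseteq\mathbb{R}^n$ containing $f$ in their interiors, $d_f(B_1,B_2)=d_H((B_1-f)^\circ,(B_2-f)^\circ)$, where $d_H$ is the Hausdorff metric on nonempty compact sets. *)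

From HB Require Import structures.
From mathcomp Require Import all_boot all_order all_algebra.
From mathcomp Require Import all_classical all_reals all_analysis.
Set Implicit Arguments. Unset Strict Implicit. Unset Printing Implicit Defensive.
Import Order.TTheory GRing.Theory Num.Theory.
Import numFieldNormedType.Exports.
Local Open Scope classical_set_scope.
Local Open Scope ring_scope.

Section Defs.
Context {R : realType} {n : nat}.
Local Notation vec := 'rV[R]_n.

Definition dotv (r x : vec) : R := \sum_(i < n) r 0 i * x 0 i.

Definition enorm (x : vec) : R := Num.sqrt (dotv x x).

Definition convhull (S : set vec) : set vec :=
  [set p | exists (k : nat) (x : 'I_k -> vec) (l : 'I_k -> R),
      (forall i, S (x i)) /\ (forall i, 0 <= l i) /\ \sum_(i < k) l i = 1 /\
      p = \sum_(i < k) l i *: x i].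

Definition conehull (S : set vec) : set vec :=
  [set p | exists (k : nat) (x : 'I_k -> vec) (l : 'I_k -> R),
      (forall i, S (x i)) /\ (forall i, 0 <= l i) /\
      p = \sum_(i < k) l i *: x i].

Definition minkowski_sum (A B : set vec) : set vec := [set a + b | a in A & b in B].

Definition translate (A : set vec) (f : vec) : set vec := [set a - f | a in A].

Definition polar (X : set vec) : set vec :=
  [set r | forall x, X x -> dotv r x <= 1].

(* On nonempty compact sets
   this is the usual Hausdorff metric. *)
Definition hausdorff (A B : set vec) : \bar R :=
  ereal_inf [set (e%:E)%E | e in
    [set e : R | 0 <= e /\
       (forall a, A a -> exists2 b, B b & enorm (a - b) <= e) /\
       (forall b, B b -> exists2 a, A a & enorm (a - b) <= e)]].

Definition dist_f (f : vec) (B1 B2 : set vec) : \bar R :=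
  hausdorff (polar (translate B1 f)) (polar (translate B2 f)).

End Defs.

From HB Require Import structures.
From mathcomp Require Import all_boot all_order all_algebra.
From mathcomp Require Import all_classical all_reals all_analysis.
From mathcomp Require Import ring lra.
Import Order.TTheory GRing.Theory Num.Theory.
Import numFieldNormedType.Exports.
Local Open Scope classical_set_scope.
Local Open Scope ring_scope.

(* Extend L_t to real T > 0 and write P_T for the polar of L_T - f, P for that of
   L - f.  The L_T increase because f + T1 w lies on the segment [f, f + T2 w], so
   the closed sets P_T decrease, and they all contain P.  A point
   p = a + sum_j mu_j w_j of L (a in conv V, w_j in W) gives
   f + (p - f) / (1 + sum_j mu_j / T) in L_T, which has two consequences.  First,
   r in P_T implies r.(p - f) <= 1 + sum_j mu_j / T, so the P_T intersect in P.
   Second, as f is interior to L, all L_T with T >= 1 contain a common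
   cross-polytope centred at f, so f is interior to L_T and these P_T lie in a
   common box.  Closed sets decreasing inside a compact set converge to their
   intersection in the Hausdorff metric. *)

Lemma closed_cluster {T : topologicalType} {F : set_system T} {A : set T} :
  closed A -> F A -> cluster F `<=` A.
Proof. by move=> /closure_id Acl FA c; rewrite clusterE => /(_ A FA); rewrite -Acl. Qed.

Section Limits.
Context {R : realType}.

Lemma closed_decreasing_near_bigcap {U : normedModType R} {K : set U} {Q : nat -> set U} :
  compact K -> (forall N, Q N `<=` K) -> (forall N, closed (Q N)) ->
  (forall N M, (N <= M)%N -> Q M `<=` Q N) ->
  forall e, 0 < e -> exists N, forall r, Q N r -> exists2 b, (forall M, Q M b) & `|r - b| < e.
Proof.
move=> cK QK Qcl Qdecr e e0; apply/not_existsP => far.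
(* Points staying e-far from the intersection have a cluster point, which lies
   in the intersection and is e-far from it. *)
have /choice [rs rsP] N : exists r, Q N r /\ forall b, (forall M, Q M b) -> e <= `|r - b|.
  have /existsNP [r /not_implyP [QNr rfar]] := far N.
  exists r; split => // b Qb; rewrite leNgt; apply/negP => rb; apply: rfar; by exists b.
have rs_always A : (forall N, A (rs N)) -> (rs @ \oo) A.
  by move=> rsA; exists 0%N => // N _; exact: rsA.
have [c [_ rsc]] := cK _ _ (rs_always _ (fun N => QK N _ (rsP N).1)).
have cQ M : Q M c.
  apply: closed_cluster (Qcl M) _ _ rsc.
  by exists M => // N /= MN; exact: Qdecr MN _ (rsP N).1.
have far_closed : closed [set y | forall b, (forall M, Q M b) -> e <= `|y - b|].
  apply: closed_bigI => b _.
  have cont : continuous (fun y : U => `|y - b|).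
    move=> y; apply: (@continuous_comp _ _ _ (fun y => y - b) Num.norm).
      by apply: continuousB; [exact: cvg_id | exact: cst_continuous].
    exact: norm_continuous.
  exact: (proj1 (continuous_closedP _) cont _ (@closed_ge _ e)).
have := closed_cluster far_closed (rs_always _ (fun N => (rsP N).2)) _ rsc _ cQ.
by rewrite subrr normr0 leNgt e0.
Qed.

Lemma cvge0_squeeze {T : Type} (F : set_system T) {FF : Filter F} (u : T -> \bar R) :
  (forall e, 0 < e -> \forall t \near F, (0 <= u t <= e%:E)%E) -> u @ F --> 0%E.
Proof.
move=> near0; apply/fine_cvgP; split.
  apply: filterS (near0 _ ltr01) => t /andP[u0 u1].
  by rewrite ge0_fin_numE // (le_lt_trans u1) // ltry.
apply/cvgrPdist_le => e e0; apply: filterS (near0 _ e0) => t /=.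
case: (u t) => [x| |] //= /andP[]; rewrite ?lee_fin // => x0 xe.
by rewrite sub0r normrN ger0_norm.
Qed.

End Limits.

Section DotProduct.
Context {R : realType} {n : nat}.
Local Notation vec := 'rV[R]_n.
Implicit Types r x y u : vec.

Lemma dotvD r x y : dotv r (x + y) = dotv r x + dotv r y.
Proof. by rewrite /dotv -big_split; apply: eq_bigr => i _; rewrite mxE mulrDr. Qed.

Lemma dotvZ r a x : dotv r (a *: x) = a * dotv r x.
Proof. by rewrite /dotv mulr_sumr; apply: eq_bigr => i _; rewrite mxE mulrCA. Qed.

Lemma dotvN r x : dotv r (- x) = - dotv r x.
Proof. by rewrite -scaleN1r dotvZ mulN1r. Qed.

Lemma dotv0 r : dotv r 0 = 0.
Proof. by rewrite -(scale0r 0) dotvZ mul0r. Qed.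

Lemma dotv_sum r k (l : 'I_k -> R) (x : 'I_k -> vec) :
  dotv r (\sum_(i < k) l i *: x i) = \sum_(i < k) l i * dotv r (x i).
Proof.
elim: k l x => [|k IH] l x; first by rewrite !big_ord0 dotv0.
by rewrite !big_ord_recr /= dotvD dotvZ IH.
Qed.

Lemma dotv_delta r k : dotv r 'e_k = r 0 k.
Proof.
rewrite /dotv (bigD1 k) //= mxE !eqxx mulr1 big1 ?addr0 // => i ik.
by rewrite mxE eqxx /= (negbTE ik) mulr0.
Qed.

Lemma continuous_dotv u : continuous (fun y : vec => dotv y u).
Proof.
apply: continuous_big => [|i _ y]; first exact: add_continuous.
by apply: continuousM; [exact: coord_continuous | exact: cst_continuous].
Qed.

Lemma closed_dotv_le u (beta : R) : closed [set y : vec | dotv y u <= beta].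
Proof. exact: (proj1 (continuous_closedP _) (continuous_dotv u) _ (@closed_le _ beta)). Qed.

Lemma closed_polar (X : set vec) : closed (polar X).
Proof.
rewrite (_ : polar X = \bigcap_(x in X) [set r | dotv r x <= 1]) //.
by apply: closed_bigI => x _; exact: closed_dotv_le.
Qed.

Lemma coord_le_norm x i : `|x 0 i| <= `|x|.
Proof. by rewrite [leRHS]mx_normrE; apply/bigmax_geP; right; exists (0, i). Qed.

Lemma enorm_le x : enorm x <= n%:R * `|x|.
Proof.
rewrite /enorm -[leRHS]ger0_norm ?mulr_ge0 // -sqrtr_sqr ler_sqrt ?sqr_ge0 //.
rewrite /dotv exprMn (@le_trans _ _ (\sum_(i < n) `|x| ^+ 2)) //.
  apply: ler_sum => i _; rewrite -expr2 -real_normK ?num_real //.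
  by rewrite lerXn2r ?nnegrE ?coord_le_norm.
rewrite sumr_const card_ord -[`|x| ^+ 2 *+ n]mulr_natl ler_wpM2r ?sqr_ge0 //.
rewrite -natrX ler_nat.
by case: n => // m; rewrite expnS leq_pmulr // expn_gt0.
Qed.

Lemma enorm0 : enorm (0 : vec) = 0.
Proof. by rewrite /enorm dotv0 sqrtr0. Qed.

Definition pm_unit (k : 'I_n) (s : bool) : vec := if s then 'e_k else - 'e_k.

Lemma dotv_pm_unit r k s : dotv r (pm_unit k s) = if s then r 0 k else - r 0 k.
Proof. by case: s; rewrite /pm_unit ?dotvN dotv_delta. Qed.

Lemma norm_pm_unit_le1 k s : `|pm_unit k s| <= 1.
Proof.
rewrite [leLHS]/Num.norm /= mx_normrE; apply/bigmax_leP; split => // -[i j] _ /=.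
rewrite (ord1 i) /pm_unit.
by case: s; rewrite ?mxE ?normrN; case: (_ && _); rewrite ?normr1 ?normr0.
Qed.

Lemma scale_norm_pm_unit (a : R) k : `|a| *: pm_unit k (0 <= a) = a *: 'e_k.
Proof.
rewrite /pm_unit; case: leP => [a0|a0]; first by rewrite ger0_norm.
by rewrite ltr0_norm // scaleNr scalerN opprK.
Qed.

End DotProduct.

Definition ord_cons {A : Type} {k : nat} (a : A) (F : 'I_k -> A) (i : 'I_k.+1) : A :=
  if unlift ord0 i is Some j then F j else a.

Lemma ord_cons0 {A : Type} {k : nat} (a : A) (F : 'I_k -> A) : ord_cons a F ord0 = a.
Proof. by rewrite /ord_cons unlift_none. Qed.

Lemma ord_consS {A : Type} {k : nat} (a : A) (F : 'I_k -> A) j :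
  ord_cons a F (lift ord0 j) = F j.
Proof. by rewrite /ord_cons liftK. Qed.

Section Hulls.
Context {R : realType} {n : nat}.
Local Notation vec := 'rV[R]_n.
Implicit Types (S T X Y : set vec) (g u : vec).

Lemma mem_convhull S x : S x -> convhull S x.
Proof.
move=> Sx; exists 1%N, (fun=> x), (fun=> 1).
by rewrite !big_ord1 scale1r.
Qed.

Lemma convhullS S T : S `<=` T -> convhull S `<=` convhull T.
Proof.
move=> ST p [k [x [l [Sx [l0 [l1 ->]]]]]].
by exists k, x, l; split => // i; apply: ST.
Qed.

Lemma convhull_convex2 S x y a : convhull S x -> convhull S y -> 0 <= a <= 1 ->
  convhull S (a *: x + (1 - a) *: y).
Proof.
move=> [k1 [x1 [l1 [S1 [l10 [l11 ->]]]]]] [k2 [x2 [l2 [S2 [l20 [l21 ->]]]]]].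
move=> /andP[a0 a1].
pose glue A (F1 : 'I_k1 -> A) (F2 : 'I_k2 -> A) i :=
  match fintype.split i with inl j => F1 j | inr j => F2 j end.
exists (k1 + k2)%N, (glue _ x1 x2), (glue _ (fun j => a * l1 j) (fun j => (1 - a) * l2 j)).
have glue_l A F1 F2 j : glue A F1 F2 (lshift k2 j) = F1 j.
  by rewrite /glue (unsplitK (inl j : 'I_k1 + 'I_k2)).
have glue_r A F1 F2 j : glue A F1 F2 (rshift k1 j) = F2 j.
  by rewrite /glue (unsplitK (inr j : 'I_k1 + 'I_k2)).
split; first by move=> i; rewrite /glue; case: fintype.split.
split.
  move=> i; rewrite /glue; case: fintype.split => j.
    exact: mulr_ge0.
  by rewrite mulr_ge0 ?subr_ge0.
rewrite !big_split_ord /=.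
under eq_bigr do rewrite glue_l; under [X in _ + X = _]eq_bigr do rewrite glue_r.
under [X in _ = X + _]eq_bigr do rewrite !glue_l.
under [X in _ = _ + X]eq_bigr do rewrite !glue_r.
rewrite -!mulr_sumr l11 l21 !mulr1 addrC subrK; split => //.
by rewrite !scaler_sumr; congr (_ + _); apply: eq_bigr => i _; rewrite scalerA.
Qed.

Lemma convhull_convex S k (y : 'I_k -> vec) (l : 'I_k -> R) :
  (forall i, convhull S (y i)) -> (forall i, 0 <= l i) -> \sum_(i < k) l i = 1 ->
  convhull S (\sum_(i < k) l i *: y i).
Proof.
elim: k y l => [|k IH] y l Sy l0 l1.
  by move: l1; rewrite big_ord0 => /eqP; rewrite eq_sym oner_eq0.
rewrite big_ord_recl; move: l1; rewrite big_ord_recl => l1.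
set s := \sum_(i < k) l (lift ord0 i) in l1 *.
have [s0|s_neq0] := eqVneq s 0.
  have l_eq0 := psumr_eq0P (fun i _ => l0 (lift ord0 i)) s0.
  rewrite big1 ?addr0; last by move=> i _; rewrite l_eq0 // scale0r.
  by move: l1; rewrite s0 addr0 => ->; rewrite scale1r.
have -> : \sum_(i < k) l (lift ord0 i) *: y (lift ord0 i) =
    (1 - l ord0) *: \sum_(i < k) (l (lift ord0 i) / s) *: y (lift ord0 i).
  rewrite scaler_sumr; apply: eq_bigr => i _; rewrite scalerA.
  by rewrite -l1 addrAC subrr add0r mulrCA mulfV // mulr1.
apply: convhull_convex2; first exact: Sy.
  apply: IH => // [i|]; first by rewrite divr_ge0 // sumr_ge0.
  by rewrite -mulr_suml mulfV.
by rewrite l0 /= -l1 lerDl sumr_ge0.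
Qed.

Lemma convhull_cons S k x0 (x : 'I_k -> vec) l0 (l : 'I_k -> R) :
  convhull S x0 -> (forall i, convhull S (x i)) ->
  0 <= l0 -> (forall i, 0 <= l i) -> l0 + \sum_(i < k) l i = 1 ->
  convhull S (l0 *: x0 + \sum_(i < k) l i *: x i).
Proof.
move=> Sx0 Sx l00 l_ge0 l1.
have -> : l0 *: x0 + \sum_(i < k) l i *: x i =
    \sum_(i < k.+1) ord_cons l0 l i *: ord_cons x0 x i.
  by rewrite big_ord_recl !ord_cons0; under [in RHS]eq_bigr do rewrite !ord_consS.
apply: convhull_convex => [i|i|]; try by rewrite /ord_cons; case: unlift.
by rewrite big_ord_recl ord_cons0; under eq_bigr do rewrite ord_consS.
Qed.

Lemma convhull_sub_hull S T : S `<=` convhull T -> convhull S `<=` convhull T.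
Proof.
move=> ST p [k [x [l [Sx [l0 [l1 ->]]]]]].
by apply: convhull_convex => // i; apply: ST.
Qed.

Lemma convhull_segment {S g u a b} : convhull S g -> convhull S (g + a *: u) ->
  0 < a -> 0 <= b <= a -> convhull S (g + b *: u).
Proof.
move=> Sg Sgu a0 /andP[b0 ba].
have ba01 : 0 <= b / a <= 1 by rewrite divr_ge0 ?ler_pdivrMr ?mul1r // ltW.
suff <- : b / a *: (g + a *: u) + (1 - b / a) *: g = g + b *: u.
  exact: convhull_convex2.
by apply/rowP => i; rewrite !mxE; field; rewrite gt_eqF.
Qed.

Lemma convhull_cross_ball S g m : 0 < m -> convhull S g ->
  (forall k s, convhull S (g + m *: pm_unit k s)) -> ball g (m / n.+1%:R) `<=` convhull S.
Proof.
move=> m0 Sg Scross x; rewrite -ball_normE /ball_ /= distrC => gx.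
pose d := x - g.
have d_le k : `|d 0 k| / m <= n.+1%:R^-1.
  by rewrite ler_pdivrMr // mulrC (le_trans (coord_le_norm _ _)) ?ltW.
have sum_le1 : \sum_k `|d 0 k| / m <= 1.
  apply: le_trans (ler_sum _ (fun k _ => d_le k)) _.
  rewrite sumr_const card_ord -[_ *+ n]mulr_natl ler_pdivrMr ?ltr0Sn // mul1r ler_nat.
  exact: leqnSn.
have -> : x = (1 - \sum_k `|d 0 k| / m) *: g +
    \sum_k (`|d 0 k| / m) *: (g + m *: pm_unit k (0 <= d 0 k)).
  under [X in _ = _ + X]eq_bigr
    do rewrite scalerDr scalerA mulfVK ?gt_eqF // scale_norm_pm_unit.
  rewrite big_split /= -[\sum_(k < n) _ *: g]scaler_suml -row_sum_delta.
  by rewrite addrA -scalerDl subrK scale1r /d addrC subrK.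
apply: convhull_cons => // [|k|]; first by rewrite subr_ge0.
  by rewrite divr_ge0 // ltW.
by rewrite subrK.
Qed.

Lemma conehull0 X : conehull X 0.
Proof. by exists 0%N, (fun=> 0), (fun=> 0); rewrite big_ord0; split => // -[]. Qed.

Lemma conehull_cons X c w s : conehull X c -> X w -> 0 <= s -> conehull X (s *: w + c).
Proof.
move=> [k [x [l [Xx [l0 ->]]]]] Xw s0.
exists k.+1, (ord_cons w x), (ord_cons s l).
split; first by move=> i; rewrite /ord_cons; case: unlift.
split; first by move=> i; rewrite /ord_cons; case: unlift.
by rewrite big_ord_recl !ord_cons0; under [in RHS]eq_bigr do rewrite !ord_consS.
Qed.

Lemma polar_translateS X Y g : X `<=` Y -> polar (translate Y g) `<=` polar (translate X g).
Proof. by move=> XY r Yr _ [x Xx <-]; apply: Yr; exists x => //; exact: XY. Qed.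

Lemma polar_translate_convhull S g :
  polar (translate (convhull S) g) = [set r | forall x, S x -> dotv r (x - g) <= 1].
Proof.
apply/seteqP; split => r Sr.
  by move=> x Sx; apply: Sr; exists x => //; exact: mem_convhull.
move=> _ [_ [k [x [l [Sx [l0 [l1 ->]]]]]] <-].
have -> : \sum_(i < k) l i *: x i - g = \sum_(i < k) l i *: (x i - g).
  by under [RHS]eq_bigr do rewrite scalerBr; rewrite sumrB -scaler_suml l1 scale1r.
by rewrite dotv_sum -l1; apply: ler_sum => i _; rewrite ler_piMr ?Sr.
Qed.

End Hulls.

Section Hausdorff.
Context {R : realType} {n : nat}.
Implicit Types A B : set 'rV[R]_n.

Lemma hausdorff_ge0 A B : (0 <= hausdorff A B)%E.
Proof. by apply/ereal_infP => _ [e [e0 _] <-]; rewrite lee_fin. Qed.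

Lemma hausdorff_le A B (e : R) : 0 <= e ->
  (forall a, A a -> exists2 b, B b & enorm (a - b) <= e) ->
  (forall b, B b -> exists2 a, A a & enorm (a - b) <= e) ->
  (hausdorff A B <= e%:E)%E.
Proof. by move=> e0 AB BA; apply: ereal_inf_lbound; exists e. Qed.

End Hausdorff.

Section Approximation.
Context {R : realType} {n : nat}.
Local Notation vec := 'rV[R]_n.
Variables (V W : set vec) (f : vec).

Let L := minkowski_sum (convhull V) (conehull W).

Definition Lhull (T : R) := convhull (V `|` [set f + T *: w | w in W]).

Lemma Lhull_shrink {a k} {w : 'I_k -> vec} {mu : 'I_k -> R} {T} :
  convhull V a -> (forall j, W (w j)) -> (forall j, 0 <= mu j) -> 0 < T ->
  Lhull T (f + (1 + (\sum_j mu j) / T)^-1 *: (a + \sum_j mu j *: w j - f)).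
Proof.
move=> Va Ww mu0 T0; set B := \sum_j mu j; set c := 1 + B / T.
set s := \sum_j mu j *: w j.
have B0 : 0 <= B by exact: sumr_ge0.
have c0 : 0 < c by rewrite ltr_pwDl // divr_ge0 // ltW.
have weight_f : B / (T * c) = 1 - c^-1.
  by rewrite /c; field; rewrite !gt_eqF // ltr_pwDl // divr_ge0 // ltW.
have -> : f + c^-1 *: (a + s - f) = c^-1 *: a + \sum_j (mu j / (T * c)) *: (f + T *: w j).
  under eq_bigr do rewrite scalerDr scalerA.
  rewrite big_split /= -scaler_suml -mulr_suml -/B weight_f.
  have -> : \sum_j (mu j / (T * c) * T) *: w j = c^-1 *: s.
    rewrite /s scaler_sumr; apply: eq_bigr => j _; rewrite scalerA.
    by congr (_ *: _); rewrite invfM; field; rewrite !gt_eqF.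
  by apply/rowP => i; rewrite !mxE; ring.
apply: convhull_cons.
- by apply: convhullS Va => x Vx; left.
- by move=> j; apply: mem_convhull; right; exists (w j).
- by rewrite invr_ge0 ltW.
- by move=> j; rewrite divr_ge0 // mulr_ge0 // ltW.
- by rewrite -mulr_suml -/B weight_f addrC subrK.
Qed.

Lemma mem_Lhull_f T : L f -> 0 < T -> Lhull T f.
Proof.
move=> [a Va [_ [k [w [mu [Ww [mu0 ->]]]]] fE]] T0.
by have := Lhull_shrink Va Ww mu0 T0; rewrite fE subrr scaler0 addr0.
Qed.

Lemma Lhull_le T1 T2 : L f -> 0 <= T1 -> T1 <= T2 -> 0 < T2 -> Lhull T1 `<=` Lhull T2.
Proof.
move=> fL T10 T12 T20; apply: convhull_sub_hull => x [Vx | [w Ww <-]].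
  by apply: mem_convhull; left.
apply: (convhull_segment (mem_Lhull_f T2 fL T20) _ T20); last by rewrite T10.
by apply: mem_convhull; right; exists w.
Qed.

Lemma polar_Lhull_antitone T1 T2 : L f -> 0 < T1 -> T1 <= T2 ->
  polar (translate (Lhull T2) f) `<=` polar (translate (Lhull T1) f).
Proof.
move=> fL T10 T12; apply/polar_translateS/Lhull_le => //; first exact: ltW.
exact: lt_le_trans T12.
Qed.

Lemma polar_L_dotv_le0 r w : L f -> polar (translate L f) r -> W w -> dotv r w <= 0.
Proof.
move=> [a Va [c Wc fE]] Lr Ww; rewrite leNgt; apply/negP => rw0.
have /Lr : translate L f ((2 / dotv r w) *: w).
  exists (f + (2 / dotv r w) *: w); last by rewrite addrC addKr.
  exists a => //; exists ((2 / dotv r w) *: w + c).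
    by apply: conehull_cons; rewrite ?divr_ge0 ?ltW.
  by rewrite -fE -addrA (addrC c).
by rewrite dotvZ mulfVK ?gt_eqF //; lra.
Qed.

Lemma polar_L_sub_polar_Lhull T : L f -> 0 <= T ->
  polar (translate L f) `<=` polar (translate (Lhull T) f).
Proof.
move=> fL T0 r Lr; rewrite polar_translate_convhull /= => x [Vx | [w Ww <-]].
  apply: Lr; exists x => //; exists x; first exact: mem_convhull.
  by exists 0; [exact: conehull0 | rewrite addr0].
by rewrite addrC addKr dotvZ (le_trans _ ler01) // mulr_ge0_le0 ?polar_L_dotv_le0.
Qed.

Lemma L_contract p : L f -> L p ->
  exists c, forall c' T, c <= c' -> 1 <= T -> Lhull T (f + c'^-1 *: (p - f)).
Proof.
move=> fL [a Va [_ [k [w [mu [Ww [mu0 ->]]]]] <-]].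
have B0 : 0 <= \sum_j mu j by exact: sumr_ge0.
exists (1 + \sum_j mu j) => c' T Bc' T1.
have T0 : 0 < T := lt_le_trans ltr01 T1.
have c'0 : 0 < c' by apply: lt_le_trans Bc'; rewrite ltr_pwDl.
have cT0 : 0 < 1 + (\sum_j mu j) / T by rewrite ltr_pwDl // divr_ge0 // ltW.
apply: (convhull_segment (mem_Lhull_f T fL T0) (Lhull_shrink Va Ww mu0 T0)).
  by rewrite invr_gt0.
rewrite invr_ge0 ltW //= lef_pV2 ?posrE // (le_trans _ Bc') // lerD2l.
by rewrite ler_pdivrMr // ler_peMr.
Qed.

Lemma Lhull_cross : interior L f ->
  exists2 m, 0 < m & forall T k s, 1 <= T -> Lhull T (f + m *: pm_unit k s).
Proof.
move=> Lf; have fL : L f := nbhs_singleton Lf.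
have /nbhs_ballP [e e0 ballL] := Lf.
have L_near (ks : 'I_n * bool) : L (f + (e / 2) *: pm_unit ks.1 ks.2).
  apply: ballL; rewrite -ball_normE /ball_ /= opprD addNKr normrN normrZ.
  rewrite (le_lt_trans (ler_piMr _ (norm_pm_unit_le1 _ _))) //.
  by rewrite gtr0_norm ?divr_gt0 // ltr_pdivrMr // ltr_pMr // ltr1n.
have /fin_all_exists [c contract] ks := L_contract _ fL (L_near ks).
pose C := \big[Order.max/1]_ks c ks.
have C1 : 1 <= C := bigmax_ge_id _ _ _ _.
exists (e / 2 / C) => [|T k s T1]; first by rewrite !divr_gt0 // (lt_le_trans ltr01).
have := contract (k, s) C T (le_bigmax _ _ _) T1.
by rewrite addrAC subrr add0r scalerA [C^-1 * _]mulrC.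
Qed.

Lemma interior_Lhull T : interior L f -> 1 <= T -> interior (Lhull T) f.
Proof.
move=> Lf T1; have [m m0 cross] := Lhull_cross Lf.
apply/nbhs_ballP; exists (m / n.+1%:R); first by rewrite /= divr_gt0.
apply: convhull_cross_ball m0 _ (fun k s => cross T k s T1).
exact: mem_Lhull_f T (nbhs_singleton Lf) (lt_le_trans ltr01 T1).
Qed.

Lemma polar_Lhull_bounded : interior L f -> exists M, forall T, 1 <= T ->
  polar (translate (Lhull T) f) `<=` [set r | forall k, `|r 0 k| <= M].
Proof.
move=> Lf; have [m m0 cross] := Lhull_cross Lf.
exists m^-1 => T T1 r Pr k.
have bound s : m * dotv r (pm_unit k s) <= 1.
  rewrite -dotvZ; apply: Pr; exists (f + m *: pm_unit k s); first exact: cross.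
  by rewrite addrC addKr.
have := bound true; have := bound false; rewrite !dotv_pm_unit /= mulrN => r_ge r_le.
rewrite -(ler_pM2l m0) mulfV ?gt_eqF // -[X in X * _]gtr0_norm // -normrM ler_norml.
lra.
Qed.

Lemma bigcap_polar_Lhull r : (forall N, polar (translate (Lhull N.+1%:R) f) r) ->
  polar (translate L f) r.
Proof.
move=> Pr _ [_ [a Va [_ [k [w [mu [Ww [mu0 ->]]]]] <-]] <-].
set B := \sum_j mu j; set d := dotv r _.
have B0 : 0 <= B by exact: sumr_ge0.
have d_le N : d <= 1 + B / N.+1%:R.
  have cN0 : 0 < 1 + B / N.+1%:R by rewrite ltr_pwDl // divr_ge0.
  have := Pr N _ (ex_intro2 _ _ _ (Lhull_shrink Va Ww mu0 (ltr0Sn _ N)) erefl).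
  by rewrite addrC addKr dotvZ ler_pdivrMl // mulr1.
apply/ler_addgt0Pr => e e0; apply: le_trans (d_le (Num.Def.trunc (B / e))) _.
rewrite lerD2l ler_pdivrMr ?ltr0Sn // mulrC -ler_pdivrMr //.
exact: ltW (truncnS_gt _).
Qed.

Lemma dist_f_Lhull_cvg : interior L f -> (dist_f f (Lhull t%:R) L)%E @[t --> \oo] --> 0%E.
Proof.
move=> Lf; have fL : L f := nbhs_singleton Lf.
have [M PM] := polar_Lhull_bounded Lf.
pose P N := polar (translate (Lhull N.+1%:R) f).
have P_antitone N N' : (N <= N')%N -> P N' `<=` P N.
  by move=> NN'; apply: polar_Lhull_antitone; rewrite ?ltr0Sn ?ler_nat.
have K_compact : compact [set r : vec | forall k, `[- M, M]%classic (r 0 k)].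
  by apply: (@rV_compact _ _ (fun=> `[- M, M]%classic)) => k; exact: segment_compact.
have PK N : P N `<=` [set r | forall k, `[- M, M]%classic (r 0 k)].
  move=> r Pr k; rewrite /= in_itv /= -ler_norml.
  by apply: (PM N.+1%:R) Pr k; rewrite ler1n.
apply: cvge0_squeeze => e e0.
have [N near] := closed_decreasing_near_bigcap K_compact PK (fun=> closed_polar _)
  P_antitone _ (divr_gt0 e0 (ltr0Sn _ n)).
exists N.+1 => // t /= Nt; apply/andP; split; first exact: hausdorff_ge0.
apply: hausdorff_le (ltW e0) _ _ => [a Pa | b Lb].
  have [|b /bigcap_polar_Lhull Lb ab] := near a.
    by apply: polar_Lhull_antitone Pa; rewrite ?ltr0Sn ?ler_nat.
  exists b => //; apply: le_trans (enorm_le _) _.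
  apply: le_trans (ler_wpM2l (ler0n _ n) (ltW ab)) _.
  rewrite mulrCA ger_pMr // ler_pdivrMr ?ltr0Sn // mul1r ler_nat.
  exact: leqnSn.
exists b; first exact: polar_L_sub_polar_Lhull Lb.
by rewrite subrr enorm0 ltW.
Qed.

End Approximation.

Theorem lemma4p1 (R : realType) (n : nat) (V W : set 'rV[R]_n) (f : 'rV[R]_n) :
  finite_set V -> V !=set0 ->
  finite_set W -> W !=set0 -> ~ W 0 ->
  let L := minkowski_sum (convhull V) (conehull W) in
  let Lt := fun t : nat => convhull (V `|` [set f + t%:R *: w | w in W]) in
  interior L f ->
  [/\ (forall t : nat, (1 <= t)%N -> interior (Lt t) f),
      (forall t : nat, (1 <= t)%N -> Lt t `<=` Lt t.+1) &
      (dist_f f (Lt t) L)%E @[t --> \oo] --> 0%E].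
Proof.
move=> _ _ _ _ _ L Lt Lf; have fL : L f := nbhs_singleton Lf.
split => [t t1 | t _ |]; last exact: dist_f_Lhull_cvg.
  by apply: interior_Lhull; rewrite ?ler1n.
by apply: Lhull_le; rewrite ?ler0n ?ler_nat ?ltr0Sn.
Qed.
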